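(* Let $(x_i)_{i\in\mathbb Z}$ be real numbers and $(a_{ij})_{i,j\in\mathbb Z}$ real weights with $a_{ij}\neq0$ for all $i,j$. Assume that for every $i$ the series $\sum_{j=1}^\infty a_{i,i+j}x_{i+j}$ and $\sum_{j=1}^\infty a_{i,i-j}x_{i-j}$ converge, and that there is a constant $K\neq0$, independent of $i$, with $K=a_{ii}+\sum_{j=1}^\infty(a_{i,i-j}+a_{i,i+j})$ for every $i$ (the series converging). Define, for all $i$, $y^F_i(0)=y^B_i(0)=\frac1K a_{ii}x_i$; $y^F_i(1)=y^F_i(0)+\frac{a_{i,i+1}}{a_{i+1,i+1}}y^F_{i+1}(0)$, $\;y^B_i(1)=y^B_i(0)+\frac{a_{i,i-1}}{a_{i-1,i-1}}y^B_{i-1}(0)$; and for $k\ge1$, $y^F_i(k+1)=y^F_i(k)+\frac{a_{i,i+k+1}}{a_{i+1,i+k+1}}\big(y^F_{i+1}(k)-y^F_{i+1}(k-1)\big)$, $y^B_i(k+1)=y^B_i(k)+\frac{a_{i,i-k-1}}{a_{i-1,i-k-1}}\big(y^B_{i-1}(k)-y^B_{i-1}(k-1)\big)$. Set $y_i(k)=y^F_i(k)+y^B_i(k)-\frac1K a_{ii}x_i$ for $k\ge0$. Then for every $i$, $$\lim_{k\to\infty}y_i(k)=\frac1K\Big(a_{ii}x_i+\sum_{j=1}^\infty(a_{i,i-j}x_{i-j}+a_{i,i+j}x_{i+j})\Big).$$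
   Context: Sensors indexed by $i\in\mathbb Z$ on a line, each with time-invariant measurement $x_i$; sensor $i$ maintains forward and backward consensus variables $y^F_i(k),y^B_i(k)$ and may communicate only with sensors $i\pm1$. *)

From Stdlib Require Import Reals ZArith.
Open Scope R_scope.

Definition series1_cv (f : nat -> R) (l : R) : Prop :=
  Un_cv (fun n => sum_f_R0 (fun j => f (S j)) n) l.

Section Consensus.
Variables (a : Z -> Z -> R) (x : Z -> R) (K : R).

Fixpoint yF (k : nat) (i : Z) {struct k} : R :=
  match k with
  | O => / K * a i i * x i
  | S O => / K * a i i * x i + a i (i + 1)%Z / a (i + 1)%Z (i + 1)%Z * (/ K * a (i+1)%Z (i+1)%Z * x (i+1)%Z)
  | S ((S k') as k1) =>
      (* step k -> k+1 with k = k1 = k'+1 >= 1 *)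
      yF k1 i + a i (i + Z.of_nat k1 + 1)%Z / a (i + 1)%Z (i + Z.of_nat k1 + 1)%Z
                 * (yF k1 (i + 1)%Z - yF k' (i + 1)%Z)
  end.

Fixpoint yB (k : nat) (i : Z) {struct k} : R :=
  match k with
  | O => / K * a i i * x i
  | S O => / K * a i i * x i + a i (i - 1)%Z / a (i - 1)%Z (i - 1)%Z * (/ K * a (i-1)%Z (i-1)%Z * x (i-1)%Z)
  | S ((S k') as k1) =>
      yB k1 i + a i (i - Z.of_nat k1 - 1)%Z / a (i - 1)%Z (i - Z.of_nat k1 - 1)%Z
                 * (yB k1 (i - 1)%Z - yB k' (i - 1)%Z)
  end.

Definition y (k : nat) (i : Z) : R := yF k i + yB k i - / K * a i i * x i.
End Consensus.

From Stdlib Require Import Reals ZArith Lra Lia.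
Open Scope R_scope.

(* Each step of the forward recursion adds exactly one new term:
   y^F_i(k+1) - y^F_i(k) = (1/K) a_{i,i+k+1} x_{i+k+1}, because the ratio
   a_{i,i+k+1}/a_{i+1,i+k+1} cancels the weight a_{i+1,i+k+1} that the
   neighbour i+1 itself added at its step k; symmetrically for y^B. *)

Lemma telescope (u d : nat -> R) :
  (forall k, u (S k) - u k = d (S k)) ->
  forall n, u (S n) = u O + sum_f_R0 (fun j => d (S j)) n.
Proof.
  intros hd n; induction n as [|n IH]; simpl.
  - specialize (hd O); lra.
  - specialize (hd (S n)); lra.
Qed.

Section Increments.
Variables (a : Z -> Z -> R) (x : Z -> R) (K : R).
Hypothesis ha : forall i j : Z, a i j <> 0.
Hypothesis hK : K <> 0.

Lemma yF_increment (k : nat) (i : Z) :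
  yF a x K (S k) i - yF a x K k i
  = / K * a i (i + Z.of_nat (S k))%Z * x (i + Z.of_nat (S k))%Z.
Proof.
  revert i; induction k as [|k IH]; intro i.
  - simpl. change (Z.pos 1) with 1%Z.
    field. repeat split; auto.
  - change (yF a x K (S (S k)) i) with
      (yF a x K (S k) i + a i (i + Z.of_nat (S k) + 1)%Z
         / a (i + 1)%Z (i + Z.of_nat (S k) + 1)%Z
         * (yF a x K (S k) (i + 1)%Z - yF a x K k (i + 1)%Z)).
    rewrite IH.
    replace (i + 1 + Z.of_nat (S k))%Z with (i + Z.of_nat (S (S k)))%Z by lia.
    replace (i + Z.of_nat (S k) + 1)%Z with (i + Z.of_nat (S (S k)))%Z by lia.
    field. repeat split; auto.
Qed.

Lemma yB_increment (k : nat) (i : Z) :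
  yB a x K (S k) i - yB a x K k i
  = / K * a i (i - Z.of_nat (S k))%Z * x (i - Z.of_nat (S k))%Z.
Proof.
  revert i; induction k as [|k IH]; intro i.
  - simpl. change (Z.pos 1) with 1%Z.
    field. repeat split; auto.
  - change (yB a x K (S (S k)) i) with
      (yB a x K (S k) i + a i (i - Z.of_nat (S k) - 1)%Z
         / a (i - 1)%Z (i - Z.of_nat (S k) - 1)%Z
         * (yB a x K (S k) (i - 1)%Z - yB a x K k (i - 1)%Z)).
    rewrite IH.
    replace (i - 1 - Z.of_nat (S k))%Z with (i - Z.of_nat (S (S k)))%Z by lia.
    replace (i - Z.of_nat (S k) - 1)%Z with (i - Z.of_nat (S (S k)))%Z by lia.
    field. repeat split; auto.
Qed.

Lemma y_partial_sum (n : nat) (i : Z) :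
  y a x K (S n) i = / K * (a i i * x i + sum_f_R0 (fun j =>
     a i (i - Z.of_nat (S j))%Z * x (i - Z.of_nat (S j))%Z
     + a i (i + Z.of_nat (S j))%Z * x (i + Z.of_nat (S j))%Z) n).
Proof.
  unfold y.
  rewrite (telescope (fun k => yF a x K k i)
             (fun k => / K * a i (i + Z.of_nat k)%Z * x (i + Z.of_nat k)%Z)
             (fun k => yF_increment k i)).
  rewrite (telescope (fun k => yB a x K k i)
             (fun k => / K * a i (i - Z.of_nat k)%Z * x (i - Z.of_nat k)%Z)
             (fun k => yB_increment k i)).
  rewrite Rmult_plus_distr_l, scal_sum; simpl yF; simpl yB.
  enough (sum_f_R0 (fun j =>
            (a i (i - Z.of_nat (S j))%Z * x (i - Z.of_nat (S j))%Z
             + a i (i + Z.of_nat (S j))%Z * x (i + Z.of_nat (S j))%Z) * / K) n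
          = sum_f_R0 (fun j => / K * a i (i + Z.of_nat (S j))%Z * x (i + Z.of_nat (S j))%Z) n
            + sum_f_R0 (fun j => / K * a i (i - Z.of_nat (S j))%Z * x (i - Z.of_nat (S j))%Z) n)
    by lra.
  rewrite <- sum_plus; apply sum_eq; intros j _; ring.
Qed.

End Increments.

Lemma series1_cv_plus (f g : nat -> R) (lf lg : R) :
  series1_cv f lf -> series1_cv g lg ->
  series1_cv (fun j => f j + g j) (lf + lg).
Proof.
  unfold series1_cv; intros hf hg.
  eapply Un_cv_ext; [|exact (CV_plus _ _ _ _ hf hg)].
  intro n; simpl; rewrite <- sum_plus; reflexivity.
Qed.

Lemma Un_cv_affine (u : nat -> R) (l b c : R) :
  Un_cv u l -> Un_cv (fun n => c * (b + u n)) (c * (b + l)).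
Proof.
  intro hu.
  assert (hconst : forall r, Un_cv (fun _ => r) r).
  { intros r e he; exists O; intros; unfold Rdist.
    rewrite Rminus_diag, Rabs_R0; lra. }
  exact (CV_mult _ _ _ _ (hconst c) (CV_plus _ _ _ _ (hconst b) hu)).
Qed.

Theorem theorem3 (x : Z -> R) (a : Z -> Z -> R) (K : R)
  (ha : forall i j : Z, a i j <> 0)
  (hK : K <> 0)
  (hF : forall i : Z, exists l, series1_cv (fun j => a i (i + Z.of_nat j)%Z * x (i + Z.of_nat j)%Z) l)
  (hB : forall i : Z, exists l, series1_cv (fun j => a i (i - Z.of_nat j)%Z * x (i - Z.of_nat j)%Z) l)
  (hKsum : forall i : Z,
     series1_cv (fun j => a i (i - Z.of_nat j)%Z + a i (i + Z.of_nat j)%Z) (K - a i i)) :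
  forall i : Z, exists S : R,
    series1_cv (fun j => a i (i - Z.of_nat j)%Z * x (i - Z.of_nat j)%Z
                         + a i (i + Z.of_nat j)%Z * x (i + Z.of_nat j)%Z) S /\
    Un_cv (fun k => y a x K k i) (/ K * (a i i * x i + S)).
Proof.
  intro i.
  destruct (hF i) as [lF HF], (hB i) as [lB HB].
  pose proof (series1_cv_plus _ _ _ _ HB HF) as HS.
  exists (lB + lF); split; [exact HS|].
  apply (CV_shift _ 1).
  eapply Un_cv_ext; [|exact (Un_cv_affine _ _ (a i i * x i) (/ K) HS)].
  intro n; rewrite Nat.add_1_r, (y_partial_sum a x K ha hK); reflexivity.
Qed.
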